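(* Let $n\ge2$, let $P$ be a partial $n$-Metric on a set $X$, let $x_o,y_o\in X$ and let $f,g:X\to X$. Suppose there are real numbers $r$ and $0<c<1$ such that, with $M=\max\{|P(\langle f(x_o)\rangle^{n-1},y_o)|,|P(\langle x_o\rangle^{n-1},y_o)|\}$, for every natural number $i$: $$r\le\min\{P(\langle f^i(x_o)\rangle^n),P(\langle g^i(y_o)\rangle^n)\},\quad P(\langle f^{i+1}(x_o)\rangle^{n-1},g^i(y_o))\le r+c^iM,\quad P(\langle f^{i}(x_o)\rangle^{n-1},g^i(y_o))\le r+c^iM$$ (i.e. $f$ and $g$ are $f$-pairwise $c_r$-contractive over $(x_o,y_o)$). Then $\{f^i(x_o)\}_{i\in\mathbb{N}}$ and $\{g^i(y_o)\}_{i\in\mathbb{N}}$ form a Cauchy pair.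
   Context: Notation: $\langle a\rangle^k$ denotes the $k$-tuple $(a,\dots,a)$ inserted into an argument list; $f^0(x)=x$, $f^{i+1}(x)=f(f^i(x))$. A partial $n$-Metric on $X$ is a function $P:X^n\to\mathbb{R}$ such that for all $x_1,\dots,x_n,a\in X$: (1) $P(\langle x_1\rangle^n)\le P(\langle x_1\rangle^{n-1},x_2)$; (2) $P$ is invariant under permutations of its arguments; (3) $P(\langle x_1\rangle^{n-1},x_2)=P(\langle x_1\rangle^n)$ and $P(\langle x_2\rangle^{n-1},x_1)=P(\langle x_2\rangle^n)$ iff $x_1=x_2$; (4) $P(x_1,\dots,x_n)\le P(x_1,\dots,x_{n-1},a)+P(\langle a\rangle^{n-1},x_n)-P(\langle a\rangle^n)$. Two sequences $\{x_i\},\{y_i\}$ form a Cauchy pair if there is $r'\in\mathbb{R}$ such that for every $\epsilon>0$ there is $N$ with $r'-\epsilon<\min\{P(\langle x_i\rangle^n),P(\langle y_i\rangle^n)\}\le P(\langle x_i\rangle^{n-1},y_j)<r'+\epsilon$ for all $i,j>N$. *)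

(* An n-ary function P : X^n -> R is represented as
   P : list X -> R, of which only the values on lists of length n matter. *)
From Stdlib Require Export Reals List Permutation.
Open Scope R_scope.

Definition rep {X : Type} (a : X) (k : nat) : list X := repeat a k.

Definition partial_nMetric {X : Type} (n : nat) (P : list X -> R) : Prop :=
  (forall x1 x2 : X, P (rep x1 n) <= P (rep x1 (n - 1) ++ x2 :: nil)) /\
  (forall l l' : list X, length l = n -> Permutation l l' -> P l = P l') /\
  (forall x1 x2 : X,
      (P (rep x1 (n - 1) ++ x2 :: nil) = P (rep x1 n) /\
       P (rep x2 (n - 1) ++ x1 :: nil) = P (rep x2 n)) <-> x1 = x2) /\
  (* (4) triangle-type inequality; l = (x1,...,x_{n-1}) *)
  (forall (l : list X) (xn a : X), length l = (n - 1)%nat ->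
      P (l ++ xn :: nil) <=
      P (l ++ a :: nil) + P (rep a (n - 1) ++ xn :: nil) - P (rep a n)).

Definition cauchy_pair {X : Type} (n : nat) (P : list X -> R)
    (x y : nat -> X) : Prop :=
  exists r' : R, forall eps : R, eps > 0 -> exists N : nat,
    forall i j : nat, (i > N)%nat -> (j > N)%nat ->
      r' - eps < Rmin (P (rep (x i) n)) (P (rep (y i) n)) /\
      Rmin (P (rep (x i) n)) (P (rep (y i) n)) <= P (rep (x i) (n - 1) ++ y j :: nil) /\
      P (rep (x i) (n - 1) ++ y j :: nil) < r' + eps.

(** Write [d u v] for [P(<u>^(n-1), v)]. Axiom (4) makes the excess [d u v - r]
    satisfy a triangle inequality through any point [v] with [P(<v>^n) >= r], and
    the permutation axiom together with (4) gives the reversal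
    [d v u - r <= (n-1) (d u v - r)]. The hypotheses bound the excesses from
    [f^i(x_o)] to [g^i(y_o)] and from [f^(i+1)(x_o)] to [g^i(y_o)] by [c^i M];
    going through [g^i(y_o)], consecutive iterates of [f] have excess
    [O(c^i)] in both directions, so by the triangle inequality and a geometric
    sum all excesses [d (f^i(x_o)) (g^j(y_o)) - r] with [i, j >= N] are [O(c^N)].
    Hence the pair is Cauchy with limit [r' = r]. *)

From Stdlib Require Import Reals List Permutation Lra Lia.
Open Scope R_scope.

Lemma pow_mul_le_of_le_1 (c K : R) (m k : nat) :
  0 <= c <= 1 -> 0 <= K -> (m <= k)%nat -> c ^ k * K <= c ^ m * K.
Proof.
  intros Hc HK Hmk. apply Rmult_le_compat_r; [exact HK|].
  induction Hmk as [|k _ IH]; [lra|].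
  simpl. pose proof (pow_le c k ltac:(lra)). nra.
Qed.

Lemma geometric_chain (e : nat -> nat -> R) (A c : R) :
  0 <= A -> 0 <= c < 1 ->
  (forall a b d, e a d <= e a b + e b d) ->
  (forall k, e k (S k) <= A * c ^ k) ->
  forall i j, (i < j)%nat -> e i j <= c ^ i * (A / (1 - c)).
Proof.
  intros HA Hc Htri Hstep.
  assert (Hsum : forall i m,
             e i (S (i + m)) <= A * (c ^ i - c ^ S (i + m)) / (1 - c)).
  { intros i m. induction m as [|m IH].
    - rewrite Nat.add_0_r. replace (A * (c ^ i - c ^ S i) / (1 - c))
        with (A * c ^ i) by (simpl; field; lra). apply Hstep.
    - rewrite Nat.add_succ_r.
      pose proof (Htri i (S (i + m)) (S (S (i + m)))).
      pose proof (Hstep (S (i + m))).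
      replace (A * (c ^ i - c ^ S (S (i + m))) / (1 - c))
        with (A * (c ^ i - c ^ S (i + m)) / (1 - c) + A * c ^ S (i + m))
        by (simpl; field; lra).
      lra. }
  intros i j Hij.
  replace j with (S (i + (j - S i))) by lia.
  eapply Rle_trans; [apply Hsum|].
  replace (c ^ i * (A / (1 - c))) with (A * c ^ i / (1 - c)) by (field; lra).
  unfold Rdiv. apply Rmult_le_compat_r.
  - left. apply Rinv_0_lt_compat. lra.
  - pose proof (pow_le c (S (i + (j - S i))) ltac:(lra)). nra.
Qed.

Lemma geometric_eventually_lt (c K eps : R) :
  0 <= c < 1 -> 0 <= K -> 0 < eps -> exists N : nat, c ^ N * K < eps.
Proof.
  intros Hc HK Heps.
  destruct (pow_lt_1_zero c ltac:(rewrite Rabs_right; lra) (eps / (K + 1)))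
    as [N HN].
  { apply Rdiv_lt_0_compat; lra. }
  exists N. specialize (HN N (le_n N)).
  rewrite Rabs_right in HN by (apply Rle_ge, pow_le; lra).
  apply Rmult_lt_compat_r with (r := K + 1) in HN; [|lra].
  replace (eps / (K + 1) * (K + 1)) with eps in HN by (field; lra).
  pose proof (pow_le c N ltac:(lra)). nra.
Qed.

Section PartialNMetric.

Context {X : Type} (n : nat) (P : list X -> R).
Hypothesis n_ge2 : (2 <= n)%nat.
Hypothesis HP : partial_nMetric n P.

Let pdist (u v : X) : R := P (rep u (n - 1) ++ v :: nil).

Lemma pdist_ge_self (u v : X) : P (rep u n) <= pdist u v.
Proof. apply HP. Qed.

Lemma pdist_diag (u : X) : pdist u u = P (rep u n).
Proof.
  unfold pdist, rep. rewrite <- repeat_cons.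
  replace n with (S (n - 1)) at 2 by lia. reflexivity.
Qed.

Lemma pdist_triangle (u v w : X) :
  pdist u w <= pdist u v + pdist v w - P (rep v n).
Proof. apply HP. unfold rep. apply repeat_length. Qed.

(* Trading the [v]'s of [<u>^k ++ <v>^m] one at a time for [u]'s, by (4) with [a = u]. *)
Lemma P_rep_app_le (u v : X) (k m : nat) : (k + m = n)%nat ->
  P (rep u k ++ rep v m) <= P (rep u n) + INR m * (pdist u v - P (rep u n)).
Proof.
  destruct HP as [_ [Hperm [_ Htri]]].
  revert k. induction m as [|m IH]; intros k Hkm.
  - simpl. rewrite app_nil_r. replace k with n by lia. lra.
  - unfold rep at 2. simpl repeat. rewrite repeat_cons, app_assoc.
    assert (Hlen : length (rep u k ++ repeat v m) = (n - 1)%nat).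
    { rewrite length_app. unfold rep. rewrite !repeat_length. lia. }
    assert (Hswap : P ((rep u k ++ repeat v m) ++ u :: nil)
                    = P (rep u (S k) ++ rep v m)).
    { symmetry. apply Hperm.
      - rewrite length_app. unfold rep. rewrite !repeat_length. lia.
      - unfold rep. simpl. apply Permutation_cons_append. }
    pose proof (Htri _ v u Hlen). pose proof (IH (S k) ltac:(lia)).
    unfold pdist in *. rewrite S_INR. lra.
Qed.

Lemma pdist_reverse_le (u v : X) :
  pdist v u <= P (rep u n) + INR (n - 1) * (pdist u v - P (rep u n)).
Proof.
  destruct HP as [_ [Hperm _]].
  assert (Hswap : pdist v u = P (rep u 1 ++ rep v (n - 1))).
  { apply Hperm.
    - rewrite length_app. unfold rep. rewrite repeat_length. simpl. lia.
    - unfold rep. simpl. apply Permutation_sym, Permutation_cons_append. }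
  rewrite Hswap. apply P_rep_app_le. lia.
Qed.

Lemma excess_triangle (r : R) (u v w : X) : r <= P (rep v n) ->
  pdist u w - r <= (pdist u v - r) + (pdist v w - r).
Proof. intros Hv. pose proof (pdist_triangle u v w). lra. Qed.

(* Uses [n - 1 >= 1] to absorb the term [(2 - n) (P(<u>^n) - r) <= 0]. *)
Lemma excess_reverse_le (r : R) (u v : X) : r <= P (rep u n) ->
  pdist v u - r <= INR (n - 1) * (pdist u v - r).
Proof.
  intros Hu. pose proof (pdist_reverse_le u v).
  assert (HL : 1 <= INR (n - 1)) by (apply (le_INR 1); lia).
  assert (0 <= (INR (n - 1) - 1) * (P (rep u n) - r)) by (apply Rmult_le_pos; lra).
  lra.
Qed.

Section ContractivePair.

Variables (x y : nat -> X) (r c M : R).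
Hypothesis c_ge0 : 0 <= c.
Hypothesis c_lt1 : c < 1.
Hypothesis M_ge0 : 0 <= M.
Hypothesis floor : forall k, r <= Rmin (P (rep (x k) n)) (P (rep (y k) n)).
Hypothesis excess_diag : forall k, pdist (x k) (y k) <= r + c ^ k * M.
Hypothesis excess_shift : forall k, pdist (x (S k)) (y k) <= r + c ^ k * M.

Lemma floor_x (k : nat) : r <= P (rep (x k) n).
Proof. eapply Rle_trans; [apply floor | apply Rmin_l]. Qed.

Lemma floor_y (k : nat) : r <= P (rep (y k) n).
Proof. eapply Rle_trans; [apply floor | apply Rmin_r]. Qed.

Let A : R := (1 + INR (n - 1)) * M.
Let B : R := M + A / (1 - c).

Lemma A_ge0 : 0 <= A.
Proof. unfold A. pose proof (pos_INR (n - 1)). nra. Qed.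

Lemma A_div_ge0 : 0 <= A / (1 - c).
Proof.
  apply Rmult_le_pos; [exact A_ge0|]. left. apply Rinv_0_lt_compat. lra.
Qed.

(* Both directions go through [y k], using the reversal on the other leg. *)
Lemma excess_x_succ (k : nat) : pdist (x k) (x (S k)) - r <= A * c ^ k.
Proof.
  pose proof (excess_triangle r (x k) (y k) (x (S k)) (floor_y k)).
  pose proof (excess_reverse_le r (x (S k)) (y k) (floor_x (S k))).
  pose proof (excess_diag k). pose proof (excess_shift k).
  pose proof (pos_INR (n - 1)).
  assert (INR (n - 1) * (pdist (x (S k)) (y k) - r) <= INR (n - 1) * (c ^ k * M))
    by (apply Rmult_le_compat_l; lra).
  unfold A. lra.
Qed.

Lemma excess_x_pred (k : nat) : pdist (x (S k)) (x k) - r <= A * c ^ k.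
Proof.
  pose proof (excess_triangle r (x (S k)) (y k) (x k) (floor_y k)).
  pose proof (excess_reverse_le r (x k) (y k) (floor_x k)).
  pose proof (excess_diag k). pose proof (excess_shift k).
  pose proof (pos_INR (n - 1)).
  assert (INR (n - 1) * (pdist (x k) (y k) - r) <= INR (n - 1) * (c ^ k * M))
    by (apply Rmult_le_compat_l; lra).
  unfold A. lra.
Qed.

Lemma excess_x_triangle (a b d : nat) :
  pdist (x a) (x d) - r <= (pdist (x a) (x b) - r) + (pdist (x b) (x d) - r).
Proof. apply excess_triangle, floor_x. Qed.

Lemma excess_x_chain (i j : nat) : (i < j)%nat ->
  pdist (x i) (x j) - r <= c ^ i * (A / (1 - c)) /\
  pdist (x j) (x i) - r <= c ^ i * (A / (1 - c)).
Proof.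
  intros Hij. split.
  - exact (geometric_chain (fun a b => pdist (x a) (x b) - r) A c
             A_ge0 ltac:(lra) excess_x_triangle excess_x_succ i j Hij).
  - refine (geometric_chain (fun a b => pdist (x b) (x a) - r) A c
              A_ge0 ltac:(lra) _ excess_x_pred i j Hij).
    intros a b d. simpl. pose proof (excess_x_triangle d b a). lra.
Qed.

Lemma excess_x_tail (N i j : nat) : (N <= i)%nat -> (N <= j)%nat ->
  pdist (x i) (x j) - r <= c ^ N * B.
Proof.
  intros Hi Hj.
  pose proof A_div_ge0 as HAc.
  assert (Hmono : forall k K, (N <= k)%nat -> 0 <= K -> c ^ k * K <= c ^ N * K)
    by (intros; apply pow_mul_le_of_le_1; lra || assumption).
  assert (0 <= c ^ N * M) by (apply Rmult_le_pos; [apply pow_le|]; lra).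
  assert (0 <= c ^ N * (A / (1 - c))) by (apply Rmult_le_pos; [apply pow_le|]; lra).
  unfold B. rewrite Rmult_plus_distr_l.
  destruct (Nat.lt_total i j) as [Hij | [<- | Hji]].
  - destruct (excess_x_chain i j Hij) as [Hc _].
    pose proof (Hmono i _ Hi HAc). lra.
  - rewrite pdist_diag.
    pose proof (pdist_ge_self (x i) (y i)). pose proof (excess_diag i).
    pose proof (Hmono i M Hi M_ge0). lra.
  - destruct (excess_x_chain j i Hji) as [_ Hc].
    pose proof (Hmono j _ Hj HAc). lra.
Qed.

Lemma excess_xy_tail (N i j : nat) : (N <= i)%nat -> (N <= j)%nat ->
  pdist (x i) (y j) - r <= c ^ N * (B + M).
Proof.
  intros Hi Hj.
  pose proof (excess_triangle r (x i) (x j) (y j) (floor_x j)).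
  pose proof (excess_x_tail N i j Hi Hj). pose proof (excess_diag j).
  pose proof (pow_mul_le_of_le_1 c M N j ltac:(lra) M_ge0 Hj).
  lra.
Qed.

Lemma contractive_cauchy_pair : cauchy_pair n P x y.
Proof.
  exists r. intros eps Heps.
  destruct (geometric_eventually_lt c (B + M) eps ltac:(lra)
              ltac:(pose proof A_div_ge0; unfold B; lra) Heps) as [N HN].
  exists N. intros i j Hi Hj.
  pose proof (floor i). pose proof (excess_xy_tail N i j ltac:(lia) ltac:(lia)).
  pose proof (pdist_ge_self (x i) (y j)).
  pose proof (Rmin_l (P (rep (x i) n)) (P (rep (y i) n))).
  unfold pdist in *. lra.
Qed.

End ContractivePair.

End PartialNMetric.

Theorem theorem5p13 (X : Type) (n : nat) (P : list X -> R)
  (xo yo : X) (f g : X -> X) (r c : R) :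
  (2 <= n)%nat ->
  partial_nMetric n P ->
  0 < c -> c < 1 ->
  (forall i : nat,
     r <= Rmin (P (rep (Nat.iter i f xo) n)) (P (rep (Nat.iter i g yo) n)) /\
     P (rep (Nat.iter (S i) f xo) (n - 1) ++ Nat.iter i g yo :: nil)
       <= r + c ^ i * Rmax (Rabs (P (rep (f xo) (n - 1) ++ yo :: nil)))
                           (Rabs (P (rep xo (n - 1) ++ yo :: nil))) /\
     P (rep (Nat.iter i f xo) (n - 1) ++ Nat.iter i g yo :: nil)
       <= r + c ^ i * Rmax (Rabs (P (rep (f xo) (n - 1) ++ yo :: nil)))
                           (Rabs (P (rep xo (n - 1) ++ yo :: nil)))) ->
  cauchy_pair n P (fun i => Nat.iter i f xo) (fun i => Nat.iter i g yo).
Proof.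
  intros Hn HP Hc0 Hc1 H.
  apply (contractive_cauchy_pair n P Hn HP _ _ r c
           (Rmax (Rabs (P (rep (f xo) (n - 1) ++ yo :: nil)))
                 (Rabs (P (rep xo (n - 1) ++ yo :: nil)))) (Rlt_le _ _ Hc0) Hc1).
  - eapply Rle_trans; [apply Rabs_pos | apply Rmax_r].
  - intros k. apply H.
  - intros k. apply H.
  - intros k. apply H.
Qed.
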